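(* Consider an arbitrary finite configuration of cities in general position in the $L\times L$ square, and let $\mathcal{G}_L$ be the network defined in the context. Suppose $\mathcal{G}_L$ is not connected. Then for any city $v_0$ there exist $m\ge0$ and distinct cities $v_0,v_1,\dots,v_m$ such that (i) $d(v_0,v_1)>d(v_1,v_2)>\dots>d(v_{m-1},v_m)$; (ii) if $m=0$ then every city within distance $\Delta(v_0)$ of $v_0$ is in the same component of $\mathcal{G}_L$ as $v_0$; (iii) if $m\ge1$ then $\Delta(v_m)<d(v_0,v_1)$.
   Context: The relative neighborhood graph (RNG) on a set of cities in $\mathbb{R}^2$ joins $x,y$ iff the lune $A_{x,y}$ (intersection of the discs of radius $d(x,y)$ centred at $x$ and at $y$, $d$ Euclidean distance) contains no other city. $\mathcal{G}_L$ is the graph on the cities in the $L\times L$ square whose edges are the pairs of these cities that are edges of the RNG for this configuration together with every locally finite configuration of cities outside the square. Components are connected components of $\mathcal{G}_L$. $\Delta(v)$ is the Euclidean distance from $v$ to the boundary of the $L\times L$ square. *)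

From Stdlib Require Import Reals List Relations.
Import ListNotations.
Open Scope R_scope.

Definition Point : Type := (R * R)%type.

Definition edist (p q : Point) : R :=
  sqrt ((fst p - fst q) ^ 2 + (snd p - snd q) ^ 2).

Definition in_square (L : R) (p : Point) : Prop :=
  0 <= fst p <= L /\ 0 <= snd p <= L.

Definition bdist (L : R) (p : Point) : R :=
  Rmin (Rmin (fst p) (L - fst p)) (Rmin (snd p) (L - snd p)).

Definition in_lune (x y z : Point) : Prop :=
  edist x z < edist x y /\ edist y z < edist x y.

Definition locally_finite (T : Point -> Prop) : Prop :=
  forall r : R, exists l : list Point,
    forall p, T p -> edist (0, 0) p <= r -> In p l.

(* edge of G_L: {x,y} is an RNG edge of S ∪ T for every locally finite
   configuration T of cities outside the square *)
Definition GL_edge (L : R) (S : list Point) (x y : Point) : Prop :=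
  In x S /\ In y S /\ x <> y /\
  forall T : Point -> Prop,
    locally_finite T ->
    (forall p, T p -> ~ in_square L p) ->
    forall z, (In z S \/ T z) -> z <> x -> z <> y -> ~ in_lune x y z.

Definition same_component (L : R) (S : list Point) (u v : Point) : Prop :=
  clos_refl_trans Point (GL_edge L S) u v.

Definition GL_connected (L : R) (S : list Point) : Prop :=
  forall u v, In u S -> In v S -> same_component L S u v.

Definition general_position (S : list Point) : Prop :=
  forall a b c d, In a S -> In b S -> In c S -> In d S ->
    a <> b -> c <> d -> edist a b = edist c d ->
    (a = c /\ b = d) \/ (a = d /\ b = c).

From Stdlib Require Import Reals List Relations Arith Lra Lia Classical.
Import ListNotations.
Open Scope R_scope.

(* If some city w with d(v0,w) <= Δ(v0) lies in another component, then v0 w is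
   not an edge, so its lune contains a city z or a point outside the square.
   In the second case Δ(w) <= d(w,z) < d(v0,w) and v0, w is already the path.
   In the first case z is disconnected from v0 or from w, which gives a
   strictly shorter disconnected pair (v0,z), resp. (w,z), and the path is
   continued from v0, resp. extended through w.  Induction on the number of
   pairs of cities closer than the current pair yields a path with strictly
   decreasing steps ending at a city closer to the boundary than its last
   step; erasing loops makes its cities distinct. *)

Lemma edist_sym p q : edist p q = edist q p.
Proof. unfold edist; f_equal; ring. Qed.

Lemma edist_nonneg p q : 0 <= edist p q.
Proof. apply sqrt_pos. Qed.

Lemma edist_refl p : edist p p = 0.
Proof.
  unfold edist; replace ((fst p - fst p) ^ 2 + (snd p - snd p) ^ 2) with 0 by ring.
  exact sqrt_0.
Qed.

Lemma Rabs_le_sqrt_sum_sq a b : Rabs a <= sqrt (a ^ 2 + b ^ 2).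
Proof.
  rewrite <- sqrt_Rsqr_abs; apply sqrt_le_1_alt.
  unfold Rsqr; pose proof (pow2_ge_0 b); lra.
Qed.

Lemma Rabs_fst_le_edist p q : Rabs (fst p - fst q) <= edist p q.
Proof. apply Rabs_le_sqrt_sum_sq. Qed.

Lemma Rabs_snd_le_edist p q : Rabs (snd p - snd q) <= edist p q.
Proof. unfold edist; rewrite Rplus_comm; apply Rabs_le_sqrt_sum_sq. Qed.

Lemma bdist_nonneg L p : in_square L p -> 0 <= bdist L p.
Proof. intros [[? ?] [? ?]]; unfold bdist; repeat apply Rmin_glb; lra. Qed.

Lemma bdist_le_edist_outside L y z : ~ in_square L z -> bdist L y <= edist y z.
Proof.
  intros Hz; apply Rnot_lt_le; intros Hlt; apply Hz.
  pose proof (Rabs_fst_le_edist y z) as Hx; pose proof (Rabs_snd_le_edist y z) as Hy.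
  pose proof (Rle_abs (fst y - fst z)); pose proof (Rle_abs (fst z - fst y)) as Hx'.
  pose proof (Rle_abs (snd y - snd z)); pose proof (Rle_abs (snd z - snd y)) as Hy'.
  rewrite Rabs_minus_sym in Hx', Hy'.
  unfold bdist in Hlt.
  pose proof (Rmin_l (fst y) (L - fst y)); pose proof (Rmin_r (fst y) (L - fst y)).
  pose proof (Rmin_l (snd y) (L - snd y)); pose proof (Rmin_r (snd y) (L - snd y)).
  pose proof (Rmin_l (Rmin (fst y) (L - fst y)) (Rmin (snd y) (L - snd y))).
  pose proof (Rmin_r (Rmin (fst y) (L - fst y)) (Rmin (snd y) (L - snd y))).
  unfold in_square; repeat split; lra.
Qed.

Lemma GL_edge_sym L S x y : GL_edge L S x y -> GL_edge L S y x.
Proof.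
  intros [Hx [Hy [Hne Hlune]]]; repeat split; auto.
  intros T HT Hout z Hz Hzy Hzx [H1 H2]; apply (Hlune T HT Hout z Hz Hzx Hzy).
  rewrite (edist_sym y x) in *; split; assumption.
Qed.

Lemma same_component_sym L S x y :
  same_component L S x y -> same_component L S y x.
Proof.
  induction 1.
  - now apply rt_step, GL_edge_sym.
  - apply rt_refl.
  - eapply rt_trans; eassumption.
Qed.

Lemma lune_witness_of_not_GL_edge L S x y :
  In x S -> In y S -> x <> y -> ~ GL_edge L S x y ->
  exists z, ((In z S /\ z <> x /\ z <> y) \/ ~ in_square L z) /\ in_lune x y z.
Proof.
  intros Hx Hy Hne Hnedge; apply NNPP; intros Hnone; apply Hnedge.
  repeat split; auto.
  intros T _ Hout z [Hz|Hz] Hzx Hzy Hl; apply Hnone; exists z; split; auto.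
Qed.

Lemma length_filter_lt {A} (f g : A -> bool) l q :
  (forall p, f p = true -> g p = true) -> In q l -> f q = false -> g q = true ->
  (length (filter f l) < length (filter g l))%nat.
Proof.
  intros Hfg; induction l as [|a l IH]; simpl; [tauto|].
  assert (Hle : (length (filter f l) <= length (filter g l))%nat).
  { clear IH; induction l as [|b l IHl]; simpl; [lia|].
    destruct (f b) eqn:Eb; [rewrite (Hfg b Eb); simpl; lia|destruct (g b); simpl; lia]. }
  intros [<-|Hq] Hf Hg.
  - rewrite Hf, Hg; simpl; lia.
  - destruct (f a) eqn:Ea; [rewrite (Hfg a Ea); simpl|destruct (g a); simpl];
      specialize (IH Hq Hf Hg); lia.
Qed.

Section Descent.

Variables (L : R) (S : list Point).
Hypothesis Hsq : forall p, In p S -> in_square L p.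

Fixpoint descent (b : R) (x : Point) (l : list Point) : Prop :=
  match l with
  | [] => bdist L x < b
  | y :: l' => In y S /\ edist x y < b /\ descent (edist x y) y l'
  end.

Lemma descent_bound_pos b x l : In x S -> descent b x l -> 0 < b.
Proof.
  destruct l as [|y l]; simpl.
  - intros Hx; pose proof (bdist_nonneg L x (Hsq x Hx)); lra.
  - intros _ [_ [Hxy _]]; pose proof (edist_nonneg x y); lra.
Qed.

Lemma descent_weaken b b' x l : b <= b' -> descent b x l -> descent b' x l.
Proof. destruct l; simpl; intros Hb; [lra|intros [? [? ?]]; repeat split; auto; lra]. Qed.

Lemma descent_suffix l1 x l2 : forall b y, descent b y (l1 ++ x :: l2) ->
  exists c, c <= b /\ descent c x l2.
Proof.
  induction l1 as [|u l1 IH]; simpl; intros b y [_ [Hyu Hrest]].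
  - exists (edist y x); split; [lra|assumption].
  - destruct (IH _ _ Hrest) as [c [Hc Hdesc]]; exists c; split; [lra|assumption].
Qed.

Lemma descent_in_S l : forall b x, descent b x l -> forall u, In u l -> In u S.
Proof.
  induction l as [|y l IH]; simpl; intros b x Hd u Hu; [contradiction|].
  destruct Hd as [Hy [_ Hd]]; destruct Hu as [<-|Hu]; eauto.
Qed.

Lemma descent_steps_decrease l : forall b x i d, descent b x l ->
  (i + 2 < length (x :: l))%nat ->
  edist (nth i (x :: l) d) (nth (i + 1) (x :: l) d) >
  edist (nth (i + 1) (x :: l) d) (nth (i + 2) (x :: l) d).
Proof.
  induction l as [|y l IH]; simpl; intros b x i d Hd Hi; [lia|].
  destruct Hd as [_ [_ Hd]]; destruct i as [|i].
  - destruct l as [|z l]; simpl in *; [lia|lra].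
  - apply (IH _ _ i d Hd); simpl; lia.
Qed.

Lemma descent_last l : forall b x d, descent b x l -> bdist L (last (x :: l) d) < b.
Proof.
  induction l as [|y l IH]; intros b x d Hd; [assumption|].
  destruct Hd as [_ [Hxy Hd]]; specialize (IH _ _ d Hd).
  change (last (x :: y :: l) d) with (last (y :: l) d); lra.
Qed.

(* Loop erasure: if the starting city reappears, restart the path there. *)
Lemma descent_nodup l : forall b x, In x S -> descent b x l ->
  exists l', descent b x l' /\ NoDup (x :: l').
Proof.
  induction l as [|y l IH]; intros b x Hx Hd.
  - exists []; split; [assumption|repeat constructor; auto].
  - destruct Hd as [Hy [Hxy Hd]].
    destruct (IH _ _ Hy Hd) as [l1 [Hd1 Hnd1]].
    destruct (classic (In x (y :: l1))) as [[<-|Hin]|Hnin].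
    + pose proof (descent_bound_pos _ _ _ Hy Hd1); rewrite edist_refl in *; lra.
    + destruct (in_split _ _ Hin) as [l2 [l3 ->]].
      destruct (descent_suffix _ _ _ _ _ Hd1) as [c [Hc Hd3]].
      exists l3; split.
      * apply (descent_weaken c); [lra|assumption].
      * apply NoDup_cons_iff in Hnd1; exact (NoDup_app_remove_l _ _ (proj2 Hnd1)).
    + exists (y :: l1); split; [simpl; auto|constructor; assumption].
Qed.

Definition pairs_closer_than (r : R) : nat :=
  length (filter (fun p => if Rlt_dec (edist (fst p) (snd p)) r then true else false)
    (list_prod S S)).

Lemma pairs_closer_than_lt a b r : In a S -> In b S -> edist a b < r ->
  (pairs_closer_than (edist a b) < pairs_closer_than r)%nat.
Proof.
  intros Ha Hb Hr; apply length_filter_lt with (q := (a, b)).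
  - intros p; destruct (Rlt_dec _ (edist a b)), (Rlt_dec _ r); auto; lra.
  - now apply in_prod.
  - simpl; destruct (Rlt_dec _ _); auto; lra.
  - simpl; destruct (Rlt_dec _ _); auto; lra.
Qed.

Lemma descent_of_disconnected x y : In x S -> In y S -> ~ same_component L S x y ->
  exists y' l, In y' S /\ edist x y' <= edist x y /\ descent (edist x y') y' l.
Proof.
  remember (pairs_closer_than (edist x y)) as n eqn:En; revert x y En.
  induction n as [n IH] using lt_wf_ind; intros x y En Hx Hy Hxy.
  assert (Hne : x <> y) by (intros ->; apply Hxy, rt_refl).
  assert (Hnedge : ~ GL_edge L S x y) by (intros He; apply Hxy, rt_step, He).
  destruct (lune_witness_of_not_GL_edge L S x y Hx Hy Hne Hnedge)
    as [z [[[Hz _]|Hout] [Hxz Hyz]]].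
  - destruct (classic (same_component L S x z)) as [Hcxz|Hcxz].
    + assert (Hcyz : ~ same_component L S y z).
      { intros Hcyz; apply Hxy; eapply rt_trans; [exact Hcxz|now apply same_component_sym]. }
      assert (Hlt : (pairs_closer_than (edist y z) < n)%nat)
        by (subst n; now apply pairs_closer_than_lt).
      destruct (IH _ Hlt y z eq_refl Hy Hz Hcyz) as [y'' [l [Hy'' [Hd Hdesc]]]].
      exists y, (y'' :: l); repeat split; auto; lra.
    + assert (Hlt : (pairs_closer_than (edist x z) < n)%nat)
        by (subst n; now apply pairs_closer_than_lt).
      destruct (IH _ Hlt x z eq_refl Hx Hz Hcxz) as [y' [l [Hy' [Hd Hdesc]]]].
      exists y', l; repeat split; auto; lra.
  - exists y, []; repeat split; auto; [lra|simpl].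
    pose proof (bdist_le_edist_outside L y z Hout); lra.
Qed.

(* The starting city x is excluded from the path thanks to d(x,y') <= Δ(x):
   a loop back to x would end at a city closer to the boundary than Δ(x). *)
Lemma simple_descent_from x y' l : In x S -> In y' S ->
  edist x y' <= bdist L x -> descent (edist x y') y' l ->
  exists v1 rest, In v1 S /\ NoDup (x :: v1 :: rest) /\ descent (edist x v1) v1 rest.
Proof.
  intros Hx Hy' Hb Hd.
  destruct (descent_nodup _ _ _ Hy' Hd) as [l1 [Hd1 Hnd1]].
  destruct (classic (In x (y' :: l1))) as [[<-|Hin]|Hnin].
  - pose proof (descent_bound_pos _ _ _ Hx Hd1); rewrite edist_refl in *; lra.
  - destruct (in_split _ _ Hin) as [l2 [l3 ->]].
    destruct (descent_suffix _ _ _ _ _ Hd1) as [c [Hc Hd3]].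
    apply NoDup_cons_iff, proj2, NoDup_app_remove_l in Hnd1.
    destruct l3 as [|v1 rest]; simpl in Hd3; [lra|].
    destruct Hd3 as [Hv1 [_ Hd3]]; exists v1, rest; auto.
  - exists y', l1; repeat split; auto; constructor; assumption.
Qed.

End Descent.

Theorem lemma4 (L : R) (S : list Point)
  (HL : 0 < L) (Hnd : NoDup S) (Hsq : forall p, In p S -> in_square L p)
  (Hgp : general_position S) (Hnc : ~ GL_connected L S)
  (v0 : Point) (Hv0 : In v0 S) :
  exists vs : list Point,
    hd_error vs = Some v0 /\ NoDup vs /\ (forall v, In v vs -> In v S) /\
    (forall i : nat, (i + 2 < length vs)%nat ->
       edist (nth i vs v0) (nth (i + 1) vs v0) >
       edist (nth (i + 1) vs v0) (nth (i + 2) vs v0)) /\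
    (length vs = 1%nat ->
       forall w, In w S -> edist v0 w <= bdist L v0 -> same_component L S v0 w) /\
    ((2 <= length vs)%nat -> bdist L (last vs v0) < edist v0 (nth 1 vs v0)).
Proof.
  destruct (classic (exists w, In w S /\ edist v0 w <= bdist L v0 /\
                                ~ same_component L S v0 w)) as [[w [Hw [Hb Hc]]]|Hall].
  - destruct (descent_of_disconnected L S v0 w Hv0 Hw Hc) as [y' [l [Hy' [Hd Hdesc]]]].
    destruct (simple_descent_from L S Hsq v0 y' l Hv0 Hy' ltac:(lra) Hdesc)
      as [v1 [rest [Hv1 [Hnd' Hdesc']]]].
    assert (Hfull : descent L S (edist v0 v1 + 1) v0 (v1 :: rest))
      by (simpl; repeat split; auto; lra).
    exists (v0 :: v1 :: rest); repeat split; auto.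
    + intros v [<-|Hv]; [assumption|exact (descent_in_S L S _ _ _ Hfull v Hv)].
    + intros i Hi; exact (descent_steps_decrease L S _ _ _ i v0 Hfull Hi).
    + simpl; lia.
    + intros _; exact (descent_last L S _ _ _ v0 Hdesc').
  - exists [v0]; repeat split.
    + repeat constructor; auto.
    + intros v [<-|[]]; assumption.
    + simpl; lia.
    + intros _ w Hw Hb; apply NNPP; intros Hc; apply Hall; exists w; auto.
    + simpl; lia.
Qed.
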